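(* Let $m,n,r,t$ be positive integers and let $E(K_n)=E_1\cup\dots\cup E_t$ be a partition of the edge set of $K_n$. Let $I$ be a random subset of $[t]$ in which each element is included independently with probability $1/r$, and suppose that \[ \mathbb{P}[\chi(\mathcal{G}_I)\ge r+1]\le \frac{1}{2m}. \] Then $g(m,n)\le r$ and $G(r)\ge\min\{m,n\}+1$.
   Context: For $I\subseteq[t]$, $\mathcal{G}_I$ is the spanning subgraph of $K_n$ with edge set $\bigcup_{i\in I}E_i$; $\chi$ is chromatic number. The grid graph $\Gamma_{m,n}$ has vertex set $[m]\times[n]$, distinct vertices $(i,j),(i',j')$ adjacent iff $i=i'$ or $j=j'$. A rectangle is the induced subgraph on $\{(i,j),(i',j),(i,j'),(i',j')\}$ with $i<i'$, $j<j'$; in an edge coloring it is alternating if $\{(i,j),(i',j)\}$ and $\{(i,j'),(i',j')\}$ share a color and $\{(i,j),(i,j')\}$ and $\{(i',j),(i',j')\}$ share a color. $g(m,n)$ is the minimum $r$ for which some $r$-coloring of the edges of $\Gamma_{m,n}$ has no alternating rectangle; $G(r)$ is the minimum $n$ such that every $r$-coloring of the edges of $\Gamma_{n,n}$ has an alternating rectangle. *)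

From mathcomp Require Import all_boot all_order all_algebra.
Set Implicit Arguments. Unset Strict Implicit. Unset Printing Implicit Defensive.
Import GRing.Theory Num.Theory.

(* A partition E(K_n) = E_1 u ... u E_t is encoded by a symmetric map
   c : 'I_n -> 'I_n -> 'I_t; the edge {u,v} (u != v) lies in E_(c u v).
   Values on the diagonal are irrelevant. *)

Definition GI_adj n t (c : 'I_n -> 'I_n -> 'I_t) (I : {set 'I_t}) : rel 'I_n :=
  fun u v => (u != v) && (c u v \in I).

Definition colorableb n (adj : rel 'I_n) (k : nat) : bool :=
  [exists f : {ffun 'I_n -> 'I_k},
     [forall u, [forall v, adj u v ==> (f u != f v)]]].

Lemma GI_colorable_n n t (c : 'I_n -> 'I_n -> 'I_t) (I : {set 'I_t}) :
  exists k, colorableb (GI_adj c I) k.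
Proof.
exists n; apply/existsP; exists [ffun u => u].
apply/forallP => u; apply/forallP => v; apply/implyP => /andP[h _].
by rewrite !ffunE.
Qed.

Definition chi_GI n t (c : 'I_n -> 'I_n -> 'I_t) (I : {set 'I_t}) : nat :=
  ex_minn (GI_colorable_n c I).

(* Probability that chi(G_I) >= r+1 when each i in [t] is put in I
   independently with probability 1/r. *)
Definition prob_chi_ge n t (c : 'I_n -> 'I_n -> 'I_t) (r : nat) : rat :=
  (\sum_(I : {set 'I_t} | (r.+1 <= chi_GI c I)%N)
     ((r%:R)^-1) ^+ #|I| * (1 - (r%:R)^-1) ^+ (t - #|I|)%N)%R.

(* Vertices of Gamma_{m,n} are pairs (i,j) in 'I_m * 'I_n.  An r-colouring
   of the edges is a symmetric map col : V -> V -> 'I_r (only its values on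
   edges, i.e. pairs in a common row or column, are ever used). *)

Definition alt_rect m n r (col : 'I_m * 'I_n -> 'I_m * 'I_n -> 'I_r)
    (i i' : 'I_m) (j j' : 'I_n) : bool :=
  [&& i < i', j < j',
      col (i, j) (i', j) == col (i, j') (i', j')
    & col (i, j) (i, j') == col (i', j) (i', j')].

Definition has_alt_rect m n r (col : 'I_m * 'I_n -> 'I_m * 'I_n -> 'I_r) : bool :=
  [exists i, exists i', exists j, exists j', alt_rect col i i' j j'].

Definition good_coloring_exists m n r : bool :=
  [exists col : {ffun 'I_m * 'I_n -> {ffun 'I_m * 'I_n -> 'I_r}},
     [forall u, [forall v, col u v == col v u]]
     && ~~ has_alt_rect (fun u v => col u v)].

Lemma good_coloring_exists_some m n : exists r, good_coloring_exists m n r.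
Proof.
exists #|{set 'I_m * 'I_n}|; apply/existsP.
exists [ffun u => [ffun v => enum_rank [set u; v]]].
apply/andP; split.
  by apply/forallP => u; apply/forallP => v; rewrite !ffunE setUC.
apply/existsP => -[i /existsP [i' /existsP [j /existsP [j' /and4P [lti ltj e _]]]]].
move: e; rewrite !ffunE => /eqP /enum_rank_inj e.
have : (i, j) \in [set (i, j'); (i', j')] by rewrite -e !inE eqxx.
rewrite !inE => /orP [] /andP [/eqP /= ei /eqP /= ej].
  by rewrite ej ltnn in ltj.
by rewrite ei ltnn in lti.
Qed.

Definition g m n : nat := ex_minn (good_coloring_exists_some m n).

Definition every_coloring_alt (r N : nat) : Prop :=
  forall col : 'I_N * 'I_N -> 'I_N * 'I_N -> 'I_r,
    (forall u v, col u v = col v u) -> has_alt_rect col.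

(* "G(r) >= k", where G(r) = min {N | every_coloring_alt r N}
   (a lower bound on this minimum; vacuous if the set is empty). *)
Definition G_ge (r k : nat) : Prop :=
  forall N, every_coloring_alt r N -> k <= N.

(* Colour the t classes of the edge partition at random, h : [t] -> [r].  For two
   independent such colourings h, h', the set of classes on which they agree is
   distributed exactly like I, so h' is "bad" for h (chi(G_agree) > r) for a
   fraction P[chi(G_I) >= r+1] <= 1/(2m) of all h'.  Greedily, some m colourings
   H_1, ..., H_m are pairwise good.  Colour the edges of row i of the grid by H_i
   through the partition, and the edges between rows i and i' by a proper
   r-colouring of G_agree(H_i, H_i').  If the two row edges of a rectangle on
   columns j, j' have the same colour, then H_i and H_i' agree on the class of
   jj', so jj' is an edge of G_agree and the two column edges get different
   colours.  Restricting to an N x N subgrid, N <= min(m, n), gives G(r) > min(m, n). *)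
From mathcomp Require Import all_boot all_order all_algebra ring.
Import GRing.Theory Num.Theory.
Set Implicit Arguments. Unset Strict Implicit. Unset Printing Implicit Defensive.

Section IndependentSet.
Variables (T : finType) (adj : rel T).
Hypothesis adj_sym : symmetric adj.

Definition independent (A : {set T}) :=
  forall x y, x \in A -> y \in A -> x != y -> ~~ adj x y.

Definition closed_nbhd (v : T) : {set T} := v |: [set u | adj v u].

Lemma independent_subset_bounded_degree K (S : {set T}) :
    (forall v, #|closed_nbhd v| <= K) ->
  exists2 A : {set T}, A \subset S /\ independent A & #|S| <= #|A| * K.
Proof.
move=> degK; move: {2}#|S| (leqnn #|S|) => k; elim: k S => [|k IH] S leSk.
  exists set0; first by split; [exact: sub0set | move=> x y; rewrite inE].
  by rewrite cards0 mul0n.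
have [-> | [v vS]] := set_0Vmem S.
  exists set0; first by split; [exact: sub0set | move=> x y; rewrite inE].
  by rewrite cards0.
have vN : v \in closed_nbhd v by rewrite setU11.
have leS'k : #|S :\: closed_nbhd v| <= k.
  rewrite -ltnS; apply: leq_trans leSk; rewrite -(cardsID (closed_nbhd v) S).
  by rewrite addnC -addn1 leq_add2l card_gt0; apply/set0Pn; exists v; rewrite inE vS.
have [A [sAS' indA] leS'A] := IH _ leS'k.
have far y : y \in A -> ~~ adj v y.
  by move/(subsetP sAS'); rewrite !inE negb_or => /andP[/andP[_]].
have vA : v \notin A by apply: contraL vN => /(subsetP sAS'); rewrite inE => /andP[].
exists (v |: A).
  split; first by rewrite subUset sub1set vS (subset_trans sAS') ?subsetDl.
  move=> x y; rewrite !inE => /orP[/eqP-> | xA] /orP[/eqP-> | yA]; rewrite ?eqxx //.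
  - by move=> _; apply: far.
  - by move=> _; rewrite adj_sym; apply: far.
  - exact: indA.
rewrite cardsU1 vA mulSn addnC.
apply: leq_trans (leq_add leS'A (degK v)).
by rewrite -(cardsID (closed_nbhd v) S) addnC leq_add2l subset_leq_card ?subsetIr.
Qed.

End IndependentSet.

Section Agreement.
Variables aT rT : finType.

Definition agree (h h' : {ffun aT -> rT}) : {set aT} := [set e | h e == h' e].

Lemma agreeC h h' : agree h h' = agree h' h.
Proof. by apply/setP => e; rewrite !inE eq_sym. Qed.

Lemma agree_id h : agree h h = setT.
Proof. by apply/setP => e; rewrite !inE eqxx. Qed.

Lemma card_agree_eq h (I : {set aT}) :
  #|[set h' | agree h h' == I]| = #|rT|.-1 ^ (#|aT| - #|I|).
Proof.
pose allowed e : pred rT := if e \in I then pred1 (h e) else predC1 (h e).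
have -> : [set h' | agree h h' == I] = [set h' in family allowed].
  apply/setP => h'; rewrite !inE; apply/eqP/familyP => [agreeI e | allowedh'].
    by rewrite /allowed -agreeI inE /= eq_sym; case: eqP => [-> | /eqP]; rewrite !inE ?eqxx.
  apply/setP => e; have := allowedh' e; rewrite /allowed !inE /= eq_sym.
  by case: (e \in I) => //= /negbTE.
rewrite cardsE card_family foldrE big_map big_enum /= (bigID (mem I)) /=.
rewrite big1 => [|e eI]; last by rewrite /allowed eI card1.
rewrite mul1n (eq_bigr (fun _ => #|rT|.-1)) => [|e eI]; last first.
  by rewrite /allowed (negbTE eI) cardC1.
by rewrite prod_nat_const -(cardC (mem I)) addKn.
Qed.

Lemma card_agree_in h (P : pred {set aT}) :
  #|[set h' | P (agree h h')]| = \sum_(I | P I) #|rT|.-1 ^ (#|aT| - #|I|).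
Proof.
rewrite -sum1_card (partition_big (agree h) P) => [|h']; last by rewrite inE.
apply: eq_bigr => I PI; rewrite -(card_agree_eq h) -sum1_card.
by apply: eq_bigl => h'; rewrite !inE andb_idl // => /eqP->.
Qed.

End Agreement.

Lemma bernoulli_weight (R : numFieldType) (r a t : nat) : 0 < r -> a <= t ->
  ((r%:R : R)^-1 ^+ a * (1 - r%:R^-1) ^+ (t - a) = (r.-1 ^ (t - a))%:R / (r ^ t)%:R)%R.
Proof.
move=> r_gt0 le_at; have r0 : (r%:R : R)%R != 0%R by rewrite pnatr_eq0 -lt0n.
have -> : (1 - (r%:R : R)^-1 = r.-1%:R / r%:R)%R.
  have er : (r%:R = r.-1%:R + 1 :> R)%R by rewrite natr1 prednK.
  by rewrite er; field; rewrite -er.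
by rewrite exprMn !exprVn mulrCA -invfM -exprD subnKC // !natrX.
Qed.

Lemma prob_chi_geE n t r (c : 'I_n -> 'I_n -> 'I_t) : 0 < r ->
  prob_chi_ge c r = ((\sum_(I | (r < chi_GI c I)%N) r.-1 ^ (t - #|I|))%:R / (r ^ t)%:R)%R.
Proof.
move=> r_gt0; rewrite /prob_chi_ge natr_sum mulr_suml; apply: eq_bigr => I _.
by rewrite bernoulli_weight // -[X in _ <= X](card_ord t) max_card.
Qed.

Section Colorings.
Variables (n : nat) (adj : rel 'I_n).

Definition proper_coloringb k (f : {ffun 'I_n -> 'I_k}) :=
  [forall u, [forall v, adj u v ==> (f u != f v)]].

Lemma colorableb_mono k k' : k <= k' -> colorableb adj k -> colorableb adj k'.
Proof.
move=> le_kk' /existsP[f /forallP properf]; apply/existsP.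
exists [ffun u => widen_ord le_kk' (f u)].
apply/forallP => u; apply/forallP => v; apply/implyP => uv; rewrite !ffunE.
by apply: contra (implyP (forallP (properf u) v) uv) => /eqP[/val_inj->].
Qed.

(* The default colouring [x0] is only returned when [adj] is not [k]-colourable. *)
Definition coloring_of k (x0 : 'I_k) : {ffun 'I_n -> 'I_k} :=
  odflt [ffun=> x0] [pick f | proper_coloringb f].

Lemma coloring_ofP k (x0 : 'I_k) u v :
  colorableb adj k -> adj u v -> coloring_of x0 u != coloring_of x0 v.
Proof.
move=> /existsP[f0 properf0] uv; rewrite /coloring_of.
case: pickP => [f /forallP properf /= | /(_ f0)]; last by rewrite /proper_coloringb properf0.
exact: implyP (forallP (properf u) v) uv.
Qed.

End Colorings.

Section ChromaticNumber.
Variables (n t : nat) (c : 'I_n -> 'I_n -> 'I_t).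

Lemma colorableb_chi_GI I k : chi_GI c I <= k -> colorableb (GI_adj c I) k.
Proof. by rewrite /chi_GI; case: ex_minnP => k0 colk0 _ /colorableb_mono; apply. Qed.

Lemma chi_GI_le I : chi_GI c I <= n.
Proof.
rewrite /chi_GI; case: ex_minnP => k _; apply; apply/existsP; exists [ffun u => u].
by apply/forallP => u; apply/forallP => v; apply/implyP => /andP[uv _]; rewrite !ffunE.
Qed.

Lemma chi_GI_setT : chi_GI c setT = n.
Proof.
apply/eqP; rewrite eqn_leq chi_GI_le /chi_GI; case: ex_minnP => k /existsP[f properf] _.
have f_inj : injective f.
  move=> u v fuv; apply: contraTeq isT => uv.
  by have := implyP (forallP (forallP properf u) v); rewrite /GI_adj uv inE fuv eqxx; apply.
by have := leq_card _ f_inj; rewrite !card_ord.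
Qed.

End ChromaticNumber.

Section GridColoring.
Variables (m n r t : nat) (c : 'I_n -> 'I_n -> 'I_t).
Hypothesis c_sym : forall u v, c u v = c v u.
Variables (H : 'I_m -> {ffun 'I_t -> 'I_r}) (x0 : 'I_r).
Hypothesis H_good : forall i i', i != i' -> chi_GI c (agree (H i) (H i')) <= r.

Definition cross_coloring i i' : {ffun 'I_n -> 'I_r} :=
  coloring_of (GI_adj c (agree (H i) (H i'))) x0.

(* [x0] colours the pairs of vertices that are not adjacent in the grid. *)
Definition grid_coloring (u v : 'I_m * 'I_n) : 'I_r :=
  if u.1 == v.1 then H u.1 (c u.2 v.2)
  else if u.2 == v.2 then cross_coloring u.1 v.1 u.2 else x0.

Lemma grid_coloring_sym u v : grid_coloring u v = grid_coloring v u.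
Proof.
rewrite /grid_coloring eq_sym; case: eqP => [-> | _]; first by rewrite c_sym.
rewrite eq_sym; case: eqP => [-> | _]; last by [].
by rewrite /cross_coloring agreeC.
Qed.

Lemma grid_coloring_no_alt_rect i i' j j' : ~~ alt_rect grid_coloring i i' j j'.
Proof.
apply/and4P => -[lt_ii' lt_jj' /eqP cross_eq /eqP row_eq].
have [ii' jj'] : i != i' /\ j != j' by rewrite !neq_ltn lt_ii' lt_jj'.
move: cross_eq row_eq; rewrite /grid_coloring /= !eqxx (negbTE ii') => cross_eq row_eq.
have : GI_adj c (agree (H i) (H i')) j j' by rewrite /GI_adj jj' inE row_eq eqxx.
by move/(coloring_ofP x0 (colorableb_chi_GI (H_good ii'))); rewrite cross_eq eqxx.
Qed.

Lemma good_coloring_exists_of_rows : good_coloring_exists m n r.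
Proof.
apply/existsP; exists [ffun u => [ffun v => grid_coloring u v]]; apply/andP; split.
  by apply/forallP => u; apply/forallP => v; rewrite !ffunE grid_coloring_sym.
apply/existsP => -[i /existsP[i' /existsP[j /existsP[j' alt]]]].
by move: alt (grid_coloring_no_alt_rect i i' j j'); rewrite /alt_rect !ffunE => ->.
Qed.

Lemma G_ge_of_rows : G_ge r (minn m n).+1.
Proof.
move=> N altN; rewrite ltnNge; apply/negP; rewrite leq_min => /andP[leNm leNn].
pose emb (u : 'I_N * 'I_N) := (widen_ord leNm u.1, widen_ord leNn u.2).
have /existsP[i /existsP[i' /existsP[j /existsP[j' alt]]]] :=
  altN (fun u v => grid_coloring (emb u) (emb v)) (fun u v => grid_coloring_sym _ _).
exact: (negP (grid_coloring_no_alt_rect (widen_ord leNm i) (widen_ord leNm i')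
                (widen_ord leNn j) (widen_ord leNn j'))) alt.
Qed.

End GridColoring.

Section GoodRows.
Variables (n t r : nat) (c : 'I_n -> 'I_n -> 'I_t).
Hypothesis r_gt0 : 0 < r.

Definition bad (h h' : {ffun 'I_t -> 'I_r}) := r < chi_GI c (agree h h').

Lemma bad_sym : symmetric bad.
Proof. by move=> h h'; rewrite /bad agreeC. Qed.

Lemma card_bad h :
  #|[set h' | bad h h']| = \sum_(I | r < chi_GI c I) r.-1 ^ (t - #|I|).
Proof. by have := card_agree_in h (fun I => r < chi_GI c I); rewrite !card_ord. Qed.

Lemma exists_good_rows m : 0 < m -> (prob_chi_ge c r <= ((2 * m)%:R)^-1)%R ->
  exists H : 'I_m -> {ffun 'I_t -> 'I_r},
    forall i i', i != i' -> chi_GI c (agree (H i) (H i')) <= r.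
Proof.
move=> m_gt0; rewrite prob_chi_geE //; set K := \sum_(I | _) _ => probK.
pose h0 : {ffun 'I_t -> 'I_r} := [ffun=> Ordinal r_gt0].
have [le_nr | lt_rn] := leqP n r.
  by exists (fun=> h0) => i i' _; apply: leq_trans (chi_GI_le _ _) le_nr.
have nbhdK h : #|closed_nbhd bad h| = K.
  have bad_refl : bad h h by rewrite /bad agree_id chi_GI_setT.
  by rewrite /closed_nbhd (setUidPr _) ?card_bad // sub1set inE.
have K_gt0 : 0 < K by rewrite -(nbhdK h0) card_gt0; apply/set0Pn; exists h0; apply: setU11.
(* The greedy argument only needs half of the hypothesis. *)
have Km_le : K * m <= r ^ t.
  have r_t_gt0 : (0 < (r ^ t)%:R :> rat)%R by rewrite ltr0n expn_gt0 r_gt0.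
  move: probK; rewrite ler_pdivrMr // mulrC ler_pdivlMr ?ltr0n ?muln_gt0 //.
  by rewrite -natrM ler_nat; apply: leq_trans; rewrite leq_pmul2l // leq_pmull.
have [A [_ indA] leA] :=
  independent_subset_bounded_degree bad_sym [set: {ffun 'I_t -> 'I_r}] (fun h => eq_leq (nbhdK h)).
have le_mA : m <= #|A|.
  rewrite -(leq_pmul2l K_gt0) (leq_trans Km_le) // mulnC.
  by move: leA; rewrite cardsT card_ffun !card_ord.
exists (fun i => enum_val (widen_ord le_mA i)) => i i' ii'.
by rewrite leqNgt indA ?enum_valP // (inj_eq enum_val_inj) -val_eqE /= val_eqE.
Qed.

End GoodRows.

Theorem lemma3p2 (m n r t : nat) (hm : 0 < m) (hn : 0 < n) (hr : 0 < r) (ht : 0 < t)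
    (c : 'I_n -> 'I_n -> 'I_t) (hc : forall u v, c u v = c v u) :
  (prob_chi_ge c r <= ((2 * m)%:R)^-1)%R ->
  g m n <= r /\ G_ge r (minn m n).+1.
Proof.
move=> probK; have [H H_good] := exists_good_rows hr hm probK.
split; last exact: (G_ge_of_rows hc (Ordinal hr) H_good).
rewrite /g; case: ex_minnP => k _; apply.
by apply: (good_coloring_exists_of_rows hc (Ordinal hr) H_good).
Qed.
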